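(* Let $\mathcal{C}$ be a Hom-finite Krull-Schmidt additive $k$-category and let $\mathcal{W}$ be a wing of $\Gamma_{\mathcal{C}}$. If the quasi-simple objects of $\mathcal{W}$ are pairwise orthogonal bricks, then $\mathcal{W}$ is schurian.
   Context: $\Gamma_{\mathcal{C}}$ is the Auslander-Reiten quiver of $\mathcal{C}$ with translation $\tau$. A wing of rank $n\ge1$ is a convex, trivially valued subquiver $\mathcal{W}$ of $\Gamma_{\mathcal{C}}$ whose vertices are pairwise distinct objects $X_{ij}$ with $1\le j\le i\le n$, whose arrows are exactly one arrow $X_{ij}\to X_{i+1,j}$ for each $j\le i<n$ and one arrow $X_{ij}\to X_{i-1,j-1}$ for each $2\le j\le i$, and such that $\tau X_{ij}=X_{i,j+1}$ for all $1\le j<i\le n$ (so there are almost split sequences $X_{n,j+1}\to X_{n-1,j}\to X_{nj}$ and $X_{i,j+1}\to X_{i-1,j}\oplus X_{i+1,j+1}\to X_{ij}$ for $j<i<n$). $X_{11}$ is the wing vertex and $X_{n1},\dots,X_{nn}$ are the quasi-simple objects. An object is a brick if its endomorphism algebra is $k$. Two objects $X,Y$ are orthogonal if $\mathrm{Hom}(X,Y)=0=\mathrm{Hom}(Y,X)$. A convex subquiver $\Sigma$ is schurian if for all $X,Y\in\Sigma$, $\dim_k\mathrm{Hom}_{\mathcal{C}}(X,Y)\le1$, and $\mathrm{Hom}_{\mathcal{C}}(X,Y)=0$ whenever $Y$ is not a successor of $X$ in $\Sigma$ (every object counts as a successor of itself). *)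

From HB Require Import structures.
From mathcomp Require Import all_boot all_order all_algebra.
Set Implicit Arguments.
Unset Strict Implicit.
Unset Printing Implicit Defensive.
Import GRing.Theory.
Local Open Scope ring_scope.

(* A k-linear category whose Hom-spaces are finite-dimensional k-vector spaces
   (vectType = finite-dimensional), i.e. a Hom-finite k-category. *)
Record kcat (k : fieldType) := KCat {
  ob :> Type;
  hom : ob -> ob -> vectType k;
  comp : forall X Y Z : ob, hom Y Z -> hom X Y -> hom X Z;
  idm : forall X : ob, hom X X;
  compA : forall (X Y Z W : ob) (h : hom Z W) (g : hom Y Z) (f : hom X Y),
      comp h (comp g f) = comp (comp h g) f;
  comp1m : forall (X Y : ob) (f : hom X Y), comp (idm Y) f = f;
  compm1 : forall (X Y : ob) (f : hom X Y), comp f (idm X) = f;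
  comp_linl : forall (X Y Z : ob) (f : hom X Y) (a : k) (g1 g2 : hom Y Z),
      comp (a *: g1 + g2) f = a *: comp g1 f + comp g2 f;
  comp_linr : forall (X Y Z : ob) (g : hom Y Z) (a : k) (f1 f2 : hom X Y),
      comp g (a *: f1 + f2) = a *: comp g f1 + comp g f2
}.

Arguments hom {k} _ _ _.
Arguments comp {k _ X Y Z}.
Arguments idm {k _}.

Notation "g \oc f" := (comp g f) (at level 40, left associativity).

Section Defs.
Variables (k : fieldType) (C : kcat k).

Definition invertible (X Y : C) (f : hom C X Y) :=
  exists g : hom C Y X, g \oc f = idm X /\ f \oc g = idm Y.

Definition isoC (X Y : C) := exists f : hom C X Y, invertible f.

Definition is_biproduct (X1 X2 S : C) (i1 : hom C X1 S) (i2 : hom C X2 S)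
  (p1 : hom C S X1) (p2 : hom C S X2) :=
  [/\ p1 \oc i1 = idm X1, p2 \oc i2 = idm X2, p1 \oc i2 = 0, p2 \oc i1 = 0
    & i1 \oc p1 + i2 \oc p2 = idm S].

Definition additive_cat :=
  (exists Z : C, idm Z = 0) /\
  forall X1 X2 : C, exists (S : C) (i1 : hom C X1 S) (i2 : hom C X2 S)
    (p1 : hom C S X1) (p2 : hom C S X2), is_biproduct i1 i2 p1 p2.

Definition local_end (X : C) :=
  idm X <> 0 /\ forall f : hom C X X, invertible f \/ invertible (idm X - f).

Definition krull_schmidt :=
  forall X : C, exists (n : nat) (Y : 'I_n -> C)
    (ins : forall i, hom C (Y i) X) (prs : forall i, hom C X (Y i)),
    [/\ forall i, local_end (Y i),
        forall i, prs i \oc ins i = idm (Y i),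
        forall i j, i != j -> prs j \oc ins i = 0
      & \sum_(i < n) ins i \oc prs i = idm X].

Definition indecomposable (X : C) :=
  idm X <> 0 /\
  forall (X1 X2 : C) (i1 : hom C X1 X) (i2 : hom C X2 X)
    (p1 : hom C X X1) (p2 : hom C X X2),
    is_biproduct i1 i2 p1 p2 -> idm X1 = 0 \/ idm X2 = 0.

Definition radC (X Y : C) (f : hom C X Y) :=
  forall g : hom C Y X, invertible (idm X - g \oc f).

Definition rad2C (X Y : C) (f : hom C X Y) :=
  exists (n : nat) (Z : 'I_n -> C) (h : forall i, hom C X (Z i))
    (g : forall i, hom C (Z i) Y),
    (forall i, radC (h i) /\ radC (g i)) /\ f = \sum_(i < n) g i \oc h i.

(* arrows X -> Y of the Auslander-Reiten quiver: X, Y indecomposable and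
   irr(X,Y) = radC(X,Y)/radC^2(X,Y) <> 0 *)
Definition arrowG (X Y : C) :=
  [/\ indecomposable X, indecomposable Y &
      exists f : hom C X Y, radC f /\ ~ rad2C f].

(* the arrow X -> Y has trivial valuation (1,1): irr(X,Y) is one-dimensional
   both over the division ring End(Y)/radC(Y,Y) and over End(X)/radC(X,X) *)
Definition trivially_valued (X Y : C) :=
  (exists f0 : hom C X Y, [/\ radC f0, ~ rad2C f0 &
     forall f : hom C X Y, radC f -> exists a : hom C Y Y, rad2C (f - a \oc f0)])
  /\
  (exists f0 : hom C X Y, [/\ radC f0, ~ rad2C f0 &
     forall f : hom C X Y, radC f -> exists b : hom C X X, rad2C (f - f0 \oc b)]).

(* almost split sequences in the sense of S. Liu *)
Definition section (X Y : C) (f : hom C X Y) :=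
  exists r : hom C Y X, r \oc f = idm X.
Definition retraction (Y Z : C) (g : hom C Y Z) :=
  exists s : hom C Z Y, g \oc s = idm Z.

Definition left_almost_split (X Y : C) (f : hom C X Y) :=
  ~ section f /\
  forall (M : C) (u : hom C X M), ~ section u -> exists v : hom C Y M, u = v \oc f.
Definition right_almost_split (Y Z : C) (g : hom C Y Z) :=
  ~ retraction g /\
  forall (M : C) (u : hom C M Z), ~ retraction u -> exists v : hom C M Y, u = g \oc v.
Definition left_minimal (X Y : C) (f : hom C X Y) :=
  forall h : hom C Y Y, h \oc f = f -> invertible h.
Definition right_minimal (Y Z : C) (g : hom C Y Z) :=
  forall h : hom C Y Y, g \oc h = g -> invertible h.
Definition pseudo_kernel (X Y Z : C) (f : hom C X Y) (g : hom C Y Z) :=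
  g \oc f = 0 /\
  forall (M : C) (u : hom C M Y), g \oc u = 0 -> exists v : hom C M X, u = f \oc v.
Definition pseudo_cokernel (X Y Z : C) (f : hom C X Y) (g : hom C Y Z) :=
  g \oc f = 0 /\
  forall (M : C) (u : hom C Y M), u \oc f = 0 -> exists v : hom C Z M, u = v \oc g.

Definition almost_split (X Y Z : C) (f : hom C X Y) (g : hom C Y Z) :=
  [/\ left_almost_split f /\ left_minimal f,
      right_almost_split g /\ right_minimal g,
      pseudo_kernel f g & pseudo_cokernel f g].

Definition in_wing (n : nat) (p : nat * nat) := (1 <= p.2 <= p.1)%N && (p.1 <= n)%N.

Definition wing_arrow (n : nat) (p q : nat * nat) :=
  [/\ in_wing n p, in_wing n q &
      q = (p.1.+1, p.2) \/ (q = (p.1.-1, p.2.-1) /\ (2 <= p.2)%N)].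

(* q is a successor of p in the wing (reflexive: p is a successor of itself) *)
Inductive wing_reach (n : nat) : nat * nat -> nat * nat -> Prop :=
| wr_refl p : wing_reach n p p
| wr_step p q r : wing_arrow n p q -> wing_reach n q r -> wing_reach n p r.

(* X : nat -> nat -> C, with X i j (for 1 <= j <= i <= n) the vertex X_ij,
   forms a wing of rank n of the Auslander-Reiten quiver *)
Definition is_wing (n : nat) (X : nat -> nat -> C) :=
  (1 <= n)%N /\
  (forall i j, in_wing n (i, j) -> indecomposable (X i j)) /\
  (forall i j i' j', in_wing n (i, j) -> in_wing n (i', j') ->
     isoC (X i j) (X i' j') -> (i, j) = (i', j')) /\
  (forall i j i' j', in_wing n (i, j) -> in_wing n (i', j') ->
     (arrowG (X i j) (X i' j') <-> wing_arrow n (i, j) (i', j'))) /\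
  (forall i j i' j', wing_arrow n (i, j) (i', j') ->
     trivially_valued (X i j) (X i' j')) /\
  (* convex: every path of Gamma between vertices of W lies in W *)
  (forall i j i' j' (m : nat) (Y : nat -> C),
     in_wing n (i, j) -> in_wing n (i', j') ->
     isoC (Y 0%N) (X i j) -> isoC (Y m) (X i' j') ->
     (forall t, (t < m)%N -> arrowG (Y t) (Y t.+1)) ->
     forall t, (t <= m)%N ->
       exists a b, in_wing n (a, b) /\ isoC (Y t) (X a b)) /\
  (* tau X_ij = X_{i,j+1}, with almost split sequences
       X_{n,j+1} -> X_{n-1,j} -> X_nj and
       X_{i,j+1} -> X_{i-1,j} (+) X_{i+1,j+1} -> X_ij  (j < i < n) *)
  (forall j, (1 <= j < n)%N ->
     exists (f : hom C (X n j.+1) (X n.-1 j)) (g : hom C (X n.-1 j) (X n j)),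
       almost_split f g) /\
  (forall i j, (1 <= j < i)%N -> (i < n)%N ->
     exists (S : C) (i1 : hom C (X i.-1 j) S) (i2 : hom C (X i.+1 j.+1) S)
       (p1 : hom C S (X i.-1 j)) (p2 : hom C S (X i.+1 j.+1))
       (f : hom C (X i j.+1) S) (g : hom C S (X i j)),
       is_biproduct i1 i2 p1 p2 /\ almost_split f g).

Definition brick (X : C) := \dim (fullv : {vspace hom C X X}) = 1%N.

Definition orthogonal_obj (X Y : C) :=
  (forall f : hom C X Y, f = 0) /\ (forall g : hom C Y X, g = 0).

Definition schurian_wing (n : nat) (X : nat -> nat -> C) :=
  forall i j i' j', in_wing n (i, j) -> in_wing n (i', j') ->
    (\dim (fullv : {vspace hom C (X i j) (X i' j')}) <= 1)%N /\
    (~ wing_reach n (i, j) (i', j') -> forall f : hom C (X i j) (X i' j'), f = 0).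

End Defs.

(* Put d(M, Y) := dim Hom(M, Y).  An almost split sequence tau Z -> E -> Z is
   exact at Hom(M, E) and Hom(E, N), and Hom(M, E) -> Hom(M, Z) misses the
   identity when M = Z; hence d(M, -) and d(-, N) are subadditive on every mesh
   of the wing, strictly so at the mesh ending in M, resp. starting at N.
   Telescoping these inequalities along the rays X_ij, X_{i+1,j}, ..., X_nj
   gives d(M, X_ij) <= d(M, X_{i+1,j+1}) + d(M, X_nj) minus the defects met on
   the way.  A downward induction on the row index then bounds first
   d(X_ij, X_nm) by [j = m], using that the quasi-simples are pairwise
   orthogonal bricks, and then d(X_ab, X_ij) by the indicator of a rectangle
   of the wing all of whose vertices are successors of X_ab. *)
From HB Require Import structures.
From mathcomp Require Import all_boot all_order all_algebra zify.

Set Implicit Arguments.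
Unset Strict Implicit.
Unset Printing Implicit Defensive.
Import GRing.Theory.

Section ExactDimension.
Variable k : fieldType.
Local Open Scope ring_scope.

Lemma dimv_img_leq (U V : vectType k) (f : 'Hom(U, V)) (W : {vspace U}) :
  (\dim (f @: W) <= \dim W)%N.
Proof. by rewrite -(limg_ker_dim f W) leq_addl. Qed.

Lemma dimv_exact (U V W : vectType k) (phi : {linear U -> V})
    (psi : {linear W -> U}) (e : bool) :
  (forall u, phi u = 0 -> exists w, u = psi w) ->
  (e -> exists v, forall u, phi u != v) ->
  (\dim {:U} + e <= \dim {:W} + \dim {:V})%N.
Proof.
move=> ker_phi not_onto.
rewrite -(limg_ker_dim (linfun phi) fullv) -addnA; apply: leq_add.
  apply: leq_trans (dimv_img_leq (linfun psi) fullv); apply: dimvS.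
  apply/subvP => u; rewrite memv_cap memv_ker lfunE => /andP[_ /eqP].
  by case/ker_phi => w ->; rewrite -[psi w]lfunE memv_img ?memvf.
case: e not_onto => [/(_ isT)[v phi_v]|_]; last by rewrite addn0 dimvS ?subvf.
rewrite addn1 ltn_neqAle dimvS ?subvf // andbT; apply/negP => /eqP dim_img.
have : v \in (linfun phi @: fullv)%VS.
  suff -> : (linfun phi @: fullv)%VS = fullv by apply: memvf.
  by apply/eqP; rewrite eqEdim subvf dim_img leqnn.
by case/memv_imgP => u _; rewrite lfunE => /esym/eqP; rewrite (negbTE (phi_v u)).
Qed.

Lemma dim_limg_can (U V : vectType k) (f : {linear U -> V}) (g : V -> U) :
  cancel f g -> \dim (linfun f @: fullv) = \dim {:U}.
Proof.
move=> fK; apply: limg_dim_eq.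
suff /eqP -> : lker (linfun f) == 0%VS by rewrite capv0.
by apply/lker0P; apply: (can_inj (g := g)) => x; rewrite lfunE.
Qed.

Lemma dimv_split (A B S : vectType k) (a : {linear A -> S}) (b : {linear B -> S})
    (pa : S -> A) (pb : S -> B) :
  cancel a pa -> cancel b pb -> (forall y, pa (b y) = 0) ->
  (\dim {:A} + \dim {:B} <= \dim {:S})%N.
Proof.
move=> aK bK pa_b.
rewrite -(dim_limg_can aK) -(dim_limg_can bK) -dimv_disjoint_sum ?dimvS ?subvf //.
apply/eqP; rewrite -subv0; apply/subvP => s; rewrite memv_cap memv0.
case/andP => /memv_imgP[x _ ->] /memv_imgP[y _]; rewrite !lfunE /= => ab.
by rewrite -[x]aK ab pa_b linear0.
Qed.

End ExactDimension.

Section HomDimension.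
Variables (k : fieldType) (C : kcat k).
Local Open Scope ring_scope.

Definition homdim (X Y : C) := \dim {: hom C X Y}.

Definition postcomp (M Y Z : C) (g : hom C Y Z) (u : hom C M Y) := g \oc u.
Definition precomp (N X Y : C) (f : hom C X Y) (u : hom C Y N) := u \oc f.
Arguments postcomp M {Y Z} g u.
Arguments precomp N {X Y} f u.

Fact postcomp_is_linear M Y Z (g : hom C Y Z) : linear (postcomp M g).
Proof. by move=> a u v; rewrite /postcomp comp_linr. Qed.

Fact precomp_is_linear N X Y (f : hom C X Y) : linear (precomp N f).
Proof. by move=> a u v; rewrite /precomp comp_linl. Qed.

HB.instance Definition _ M Y Z g :=
  GRing.isLinear.Build k _ _ _ (postcomp M g) (@postcomp_is_linear M Y Z g).
HB.instance Definition _ N X Y f :=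
  GRing.isLinear.Build k _ _ _ (precomp N f) (@precomp_is_linear N X Y f).

Lemma comp0m (X Y Z : C) (f : hom C X Y) : (0 : hom C Y Z) \oc f = 0.
Proof. exact: (linear0 (precomp Z f)). Qed.

Lemma compm0 (X Y Z : C) (g : hom C Y Z) : g \oc (0 : hom C X Y) = 0.
Proof. exact: (linear0 (postcomp X g)). Qed.

Lemma homdim_eq0P (X Y : C) : homdim X Y = 0%N <-> forall f : hom C X Y, f = 0.
Proof.
rewrite /homdim; split => [/eqP | hom0].
  by rewrite dimv_eq0 => /eqP full0 f; apply/eqP; rewrite -memv0 -full0 memvf.
by apply/eqP; rewrite dimv_eq0 -subv0; apply/subvP => f _; rewrite (hom0 f) mem0v.
Qed.

Lemma almost_split_homdim_from (M A E Z : C) (f : hom C A E) (g : hom C E Z)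
    (e : bool) :
  almost_split f g -> (e -> M = Z) ->
  (homdim M E + e <= homdim M A + homdim M Z)%N.
Proof.
case=> _ [[not_retraction _] _] [_ ker_g] _ MZ.
rewrite /homdim; apply: (@dimv_exact _ _ _ _ (postcomp M g) (postcomp M f)) => [u /ker_g[v ->]|].
  by exists v.
move=> /MZ eqMZ; subst M; exists (idm Z) => u; apply/eqP => gu.
by apply: not_retraction; exists u.
Qed.

Lemma almost_split_homdim_to (N A E Z : C) (f : hom C A E) (g : hom C E Z)
    (e : bool) :
  almost_split f g -> (e -> N = A) ->
  (homdim E N + e <= homdim A N + homdim Z N)%N.
Proof.
case=> [[[not_section _] _]] _ _ [_ coker_f] NA; rewrite /homdim [X in (_ <= X)%N]addnC.
apply: (@dimv_exact _ _ _ _ (precomp N f) (precomp N g)) => [u /coker_f[v ->]|].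
  by exists v.
move=> /NA eqNA; subst N; exists (idm A) => u; apply/eqP => uf.
by apply: not_section; exists u.
Qed.

Lemma biproduct_homdim_from (M A B S : C) (i1 : hom C A S) (i2 : hom C B S)
    (p1 : hom C S A) (p2 : hom C S B) :
  is_biproduct i1 i2 p1 p2 -> (homdim M A + homdim M B <= homdim M S)%N.
Proof.
case=> p1i1 p2i2 p1i2 _ _.
apply: (@dimv_split _ _ _ _ (postcomp M i1) (postcomp M i2) (postcomp M p1) (postcomp M p2));
  by move=> u; rewrite /postcomp compA ?p1i1 ?p2i2 ?p1i2 ?comp1m ?comp0m.
Qed.

Lemma biproduct_homdim_to (N A B S : C) (i1 : hom C A S) (i2 : hom C B S)
    (p1 : hom C S A) (p2 : hom C S B) :
  is_biproduct i1 i2 p1 p2 -> (homdim A N + homdim B N <= homdim S N)%N.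
Proof.
case=> p1i1 p2i2 _ p2i1 _.
apply: (@dimv_split _ _ _ _ (precomp N p1) (precomp N p2) (precomp N i1) (precomp N i2));
  by move=> u; rewrite /precomp -compA ?p1i1 ?p2i2 ?p2i1 ?compm1 ?compm0.
Qed.

End HomDimension.


Lemma leq_down_ind n (P : nat -> Prop) :
  P n -> (forall i, i < n -> P i.+1 -> P i) -> forall i, i <= n -> P i.
Proof.
move=> Pn IH i le_in; have [d def_n] : exists d, i + d = n by exists (n - i); lia.
elim: d i def_n {le_in} => [|d IHd] i def_n; first by move: def_n; rewrite addn0 => ->.
by apply: IH; [lia | apply: IHd; lia].
Qed.

(* [F] is subadditive on the meshes [X_{i,j+1} -> X_{i-1,j} (+) X_{i+1,j+1} -> X_ij]
   of a wing of rank [n] (without [X_{n+1,j+1}] when [i = n]), with defect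
   [delta i j] at the mesh ending in [X_ij]. *)
Definition mesh_subadditive n (F : nat -> nat -> nat) (delta : nat -> nat -> bool) :=
  (forall i j, 1 <= j < i -> i < n ->
     F i.-1 j + F i.+1 j.+1 + delta i j <= F i j.+1 + F i j) /\
  (forall j, 1 <= j < n -> F n.-1 j + delta n j <= F n j.+1 + F n j).

Lemma mesh_telescope n F delta : mesh_subadditive n F delta ->
  forall i j, 1 <= j <= i -> i < n ->
  F i j + \sum_(i.+1 <= l < n.+1) delta l j <= F i.+1 j.+1 + F n j.
Proof.
case=> mesh_inner mesh_last i j ji lt_in.
have [d def_n] : exists d, i + d.+1 = n by exists (n - i.+1); lia.
elim: d i def_n ji {lt_in} => [|d IH] i def_n ji.
  move: def_n mesh_last; rewrite addn1 => <- /(_ j ltac:(lia)).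
  by rewrite big_nat1.
rewrite big_ltn; last lia.
have := mesh_inner i.+1 j ltac:(lia) ltac:(lia); have := IH i.+1 ltac:(lia) ltac:(lia).
rewrite /=; lia.
Qed.

Lemma mesh_telescope_at n F delta l : mesh_subadditive n F delta ->
  forall i j, 1 <= j <= i -> i < l <= n -> F i j + delta l j <= F i.+1 j.+1 + F n j.
Proof.
move=> meshF i j ji il; apply: leq_trans (mesh_telescope meshF ji _); last lia.
by rewrite leq_add2l (bigD1_seq l) ?mem_index_iota ?iota_uniq //= leq_addr.
Qed.

Lemma mesh_bound_last_row n F m :
  mesh_subadditive n F (fun i j => (i, j.+1) == (n, m)) ->
  (forall j, 1 <= j <= n -> F n j <= (j == m)) ->
  forall i j, 1 <= j <= i -> i <= n -> F i j <= (j == m).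
Proof.
move=> meshF lastF i j ji le_in; move: i le_in j ji.
apply: leq_down_ind => [|i lt_in IH] j ji; first exact: lastF.
have := mesh_telescope_at (l := n) meshF ji ltac:(lia).
have := IH j.+1 ltac:(lia); have := lastF j ltac:(lia).
rewrite xpair_eqE eqxx /=; case: eqP => [->|_]; case: eqP => [->|_]; lia.
Qed.

(* The rectangle of the wing spanned by the two sectional paths leaving [X_ab]. *)
Definition hom_support n a b i j := [&& j <= b, a + j <= i + b & i + b <= n + j].

Lemma mesh_bound_hom_support n F a b : a <= n ->
  mesh_subadditive n F (fun i j => (i, j) == (a, b)) ->
  (forall j, 1 <= j <= n -> F n j <= (j == b)) ->
  forall i j, 1 <= j <= i -> i <= n -> F i j <= hom_support n a b i j.
Proof.
move=> le_an meshF lastF i j ji le_in; move: i le_in j ji.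
apply: leq_down_ind => [|i lt_in IH] j ji.
  by apply: leq_trans (lastF j ji) _; rewrite /hom_support; case: eqP => // ->; lia.
have := IH j.+1 ltac:(lia); have := lastF j ltac:(lia).
(* The ray from [X_ij] passes through the mesh ending in [X_ab] iff [j = b] and [i < a]. *)
rewrite /hom_support; case: (ltnP i a) => [lt_ia | le_ai].
  have := mesh_telescope_at (l := a) meshF ji ltac:(lia).
  rewrite xpair_eqE eqxx /=; case: eqP => [->|_] /=; lia.
have := mesh_telescope meshF ji lt_in.
case: eqP => [->|_] /=; lia.
Qed.

Lemma wing_reach_trans n p q r :
  wing_reach n p q -> wing_reach n q r -> wing_reach n p r.
Proof. by elim=> // p' q' r' pq _ IH /IH; apply: wr_step pq. Qed.

Lemma wing_reach_down n i j d :
  1 <= j <= i -> i + d <= n -> wing_reach n (i, j) (i + d, j).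
Proof.
elim: d i => [|d IH] i ji le_n; first by rewrite addn0; apply: wr_refl.
apply: (@wr_step _ _ (i.+1, j)); first by split; rewrite /in_wing /=; [lia | lia | left].
by rewrite -addSnnS; apply: IH; lia.
Qed.

Lemma wing_reach_up n i j d :
  1 <= j <= i -> i + d <= n -> wing_reach n (i + d, j + d) (i, j).
Proof.
elim: d => [|d IH] ji le_n; first by rewrite !addn0; apply: wr_refl.
apply: (@wr_step _ _ (i + d, j + d)); last by apply: IH; lia.
by split; rewrite /in_wing /=; [lia | lia | right; split; [congr pair; lia | lia]].
Qed.

Lemma hom_support_reach n a b i j : in_wing n (a, b) -> in_wing n (i, j) ->
  hom_support n a b i j -> wing_reach n (a, b) (i, j).
Proof.
rewrite /in_wing /hom_support /= => ab ij /and3P[jb abij _].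
apply: (@wing_reach_trans _ _ (a - (b - j), j)).
  have := @wing_reach_up n (a - (b - j)) j (b - j).
  have -> : a - (b - j) + (b - j) = a by lia.
  have -> : j + (b - j) = b by lia.
  by apply; lia.
have := @wing_reach_down n (a - (b - j)) j (i - (a - (b - j))).
have -> : a - (b - j) + (i - (a - (b - j))) = i by lia.
by apply; lia.
Qed.

Section WingHomDimension.
Variables (k : fieldType) (C : kcat k) (n : nat) (X : nat -> nat -> C).
Hypothesis wingX : is_wing n X.

Lemma wing_mesh_from a b :
  mesh_subadditive n (fun i j => homdim (X a b) (X i j)) (fun i j => (i, j) == (a, b)).
Proof.
have [_ [_ [_ [_ [_ [_ [ass_last ass_inner]]]]]]] := wingX.
split=> [i j ji lt_in | j jn].
  have [S [i1 [i2 [p1 [p2 [f [g [bip ass]]]]]]]] := ass_inner i j ji lt_in.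
  apply: leq_trans (almost_split_homdim_from (e := (i, j) == (a, b)) ass _) => [|/eqP[-> ->] //].
  by rewrite leq_add2r (biproduct_homdim_from _ bip).
have [f [g ass]] := ass_last j jn.
by apply: almost_split_homdim_from ass _ => /eqP[-> ->].
Qed.

Lemma wing_mesh_to c d :
  mesh_subadditive n (fun i j => homdim (X i j) (X c d)) (fun i j => (i, j.+1) == (c, d)).
Proof.
have [_ [_ [_ [_ [_ [_ [ass_last ass_inner]]]]]]] := wingX.
split=> [i j ji lt_in | j jn].
  have [S [i1 [i2 [p1 [p2 [f [g [bip ass]]]]]]]] := ass_inner i j ji lt_in.
  apply: leq_trans (almost_split_homdim_to (e := (i, j.+1) == (c, d)) ass _) => [|/eqP[-> ->] //].
  by rewrite leq_add2r (biproduct_homdim_to _ bip).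
have [f [g ass]] := ass_last j jn.
by apply: almost_split_homdim_to ass _ => /eqP[-> ->].
Qed.

Hypothesis brickX : forall j, 1 <= j <= n -> brick (X n j).
Hypothesis orthX : forall j l, 1 <= j <= n -> 1 <= l <= n -> j != l ->
  orthogonal_obj (X n j) (X n l).

Lemma homdim_quasi_simple j m : 1 <= j <= n -> 1 <= m <= n ->
  homdim (X n j) (X n m) <= (j == m).
Proof.
move=> jn mn; case: eqP => [<-|/eqP neq_jm]; first by rewrite /homdim brickX.
by have [hom0 _] := orthX jn mn neq_jm; rewrite (proj2 (homdim_eq0P _ _) hom0).
Qed.

Lemma homdim_to_quasi_simple m i j : 1 <= m <= n -> in_wing n (i, j) ->
  homdim (X i j) (X n m) <= (j == m).
Proof.
move=> mn /andP[ji le_in].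
apply: (mesh_bound_last_row (wing_mesh_to n m)) => // l ln.
exact: homdim_quasi_simple.
Qed.

Lemma homdim_hom_support a b i j : in_wing n (a, b) -> in_wing n (i, j) ->
  homdim (X a b) (X i j) <= hom_support n a b i j.
Proof.
move=> ab /andP[ji le_in]; have /andP[ba le_an] := ab.
apply: (mesh_bound_hom_support le_an (wing_mesh_from a b)) => // l ln.
by rewrite eq_sym homdim_to_quasi_simple.
Qed.

End WingHomDimension.

Theorem lemma1p7 (k : fieldType) (C : kcat k) (n : nat) (X : nat -> nat -> C) :
  additive_cat C -> krull_schmidt C -> is_wing n X ->
  (forall j, (1 <= j <= n)%N -> brick (X n j)) ->
  (forall j l, (1 <= j <= n)%N -> (1 <= l <= n)%N -> j != l ->
     orthogonal_obj (X n j) (X n l)) ->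
  schurian_wing n X.
Proof.
move=> _ _ wingX brickX orthX a b c d ab cd.
have dim_le := homdim_hom_support wingX brickX orthX ab cd.
split; first exact: leq_trans dim_le (leq_b1 _).
move=> not_reach; apply/homdim_eq0P/eqP; rewrite -leqn0.
have /negbTE outside : ~~ hom_support n a b c d.
  by apply: contra_notN not_reach; apply: hom_support_reach.
by rewrite outside in dim_le.
Qed.
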